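(* Let $q$ be an odd prime power and $n=q^2+1$. For an integer $a$ with $1\le a\le n-1$, $a\in\mathrm{MinRep}_n$ if and only if either $a=\frac{q^2+1}{2}$ or $a\in[l(q+1)+1,(l+1)(q-1)]$ for some integer $l$ with $0\le l\le\frac{q-3}{2}$. Moreover, $|C_{(q^2+1)/2}|=1$ and $|C_a|=4$ for every $a\in\mathrm{MinRep}_n\setminus\{0,\frac{q^2+1}{2}\}$.
   Context: For $0\le s\le n-1$, $C_s=\{sq^i\bmod n:i\ge0\}$ is the $q$-cyclotomic coset of $s$ modulo $n$; its least element is its coset leader; $\mathrm{MinRep}_n$ is the set of all coset leaders modulo $n$. $[u,v]$ denotes the set of integers $u,u+1,\dots,v$. *)

From mathcomp Require Import all_boot.
Set Implicit Arguments. Unset Strict Implicit. Unset Printing Implicit Defensive.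

(* Since the sequence (s q^i mod n)_i takes
   values in a set of size n, every value it ever takes already occurs for
   some i < n, so bounding the exponent by n describes the same set. *)
Definition cyc_coset (q n s : nat) : {set 'I_n} :=
  [set x : 'I_n | [exists i : 'I_n, (x : nat) == (s * q ^ i) %% n]].

Definition is_min_rep (q n s : nat) : bool :=
  (s < n) && [forall x in cyc_coset q n s, s <= (x : nat)].

Definition prime_power (q : nat) : Prop :=
  exists p k : nat, prime p /\ 0 < k /\ q = p ^ k.

From mathcomp Require Import all_boot zify.
Set Implicit Arguments. Unset Strict Implicit. Unset Printing Implicit Defensive.

(* Modulo n = q^2 + 1 we have q^2 = -1, hence q^4 = 1 and C_a = {a, aq, -a, -aq}.
   If some q^d with 0 < d < 4 fixes a, then so does q^2, i.e. a = -a and a = n/2;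
   conversely q, being odd, fixes n/2.  So |C_a| is 1 for a = n/2 and 4 otherwise.
   Writing a = iq + j with 0 <= j < q, one gets aq = jq - i when j > 0 and
   aq = -i when j = 0, so a <> n/2 is the least of its four conjugates exactly
   when i < j < q - i, i.e. when a lies in [i(q+1) + 1, (i+1)(q-1)]. *)

Lemma card_ord_mem_seq n (s : seq nat) :
  all (gtn n) s -> #|[set x : 'I_n | val x \in s]| = size (undup s).
Proof.
move=> s_lt; have -> : [set x : 'I_n | val x \in s] = [set x in pmap insub (undup s)].
  by apply/setP=> x; rewrite !inE mem_pmap_sub mem_undup.
rewrite cardsE (card_uniqP _) ?pmap_sub_uniq ?undup_uniq // size_pmap_sub.
by apply/eqP; rewrite -all_count all_undup.
Qed.

Section Periodic.

Variables q n k : nat.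
Hypotheses (k_gt0 : 0 < k) (k_le_n : k <= n) (expq_k : q ^ k = 1 %[mod n]).

Lemma expn_mod_period i : q ^ i = q ^ (i %% k) %[mod n].
Proof.
rewrite {1}(divn_eq i k) expnD [_ * k]mulnC expnM -modnMml -modnXm expq_k.
by rewrite modnXm exp1n modnMml mul1n.
Qed.

Lemma mul_expn_mod_period a i : a * q ^ i = a * q ^ (i %% k) %[mod n].
Proof. by rewrite -modnMmr expn_mod_period modnMmr. Qed.

Definition coset_seq a := [seq a * q ^ i %% n | i <- iota 0 k].

Lemma cyc_coset_period a : cyc_coset q n a = [set x : 'I_n | (x : nat) \in coset_seq a].
Proof.
apply/setP=> x; rewrite !inE; apply/existsP/mapP => [[i /eqP ->] | [i]].
- exists (i %% k); first by rewrite mem_iota add0n ltn_mod.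
  exact: mul_expn_mod_period.
- rewrite mem_iota add0n => i_lt_k ->.
  by exists (widen_ord k_le_n (Ordinal i_lt_k)).
Qed.

Lemma is_min_rep_period a :
  is_min_rep q n a = (a < n) && all (leq a) (coset_seq a).
Proof.
rewrite /is_min_rep cyc_coset_period; case: (ltnP a n) => //= a_lt_n.
apply/forall_inP/allP => [le_a x x_res | le_a x]; last by rewrite inE => /le_a.
have n_gt0 : 0 < n by apply: leq_ltn_trans a_lt_n.
case/mapP: x_res => i i_in ->.
by apply: (le_a (Ordinal (ltn_pmod _ n_gt0))); rewrite inE; apply/mapP; exists i.
Qed.

Lemma card_cyc_coset_period a : #|cyc_coset q n a| = size (undup (coset_seq a)).
Proof.
rewrite cyc_coset_period card_ord_mem_seq //; apply/allP=> _ /mapP[i _ ->].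
by rewrite /= ltn_pmod // (leq_trans k_gt0 k_le_n).
Qed.

End Periodic.

Section SqrtN1.

Variables q n : nat.
Hypothesis n_dvd : n %| q ^ 2 + 1.

Lemma expq4_mod : q ^ 4 = 1 %[mod n].
Proof.
have /dvdnP[c e] := n_dvd.
rewrite -(modnMDl c) -e (_ : _ + _ = q ^ 2 * c * n + 1) ?modnMDl //.
by rewrite -mulnA -e; nia.
Qed.

Lemma mulq2_mod b : 0 < b < n -> b * q ^ 2 %% n = n - b.
Proof.
move=> /andP[b_gt0 b_lt_n]; have /dvdnP[c e] := n_dvd.
have c_gt0 : 0 < c by case: c e; rewrite addn1.
have e' : b * q ^ 2 + b = b * c * n by rewrite -mulnA -e mulnDr muln1.
have bcn : n <= b * c * n by rewrite leq_pmull // muln_gt0 b_gt0.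
rewrite (_ : b * q ^ 2 = (b * c - 1) * n + (n - b)); last by rewrite mulnBl mul1n; lia.
by rewrite modnMDl modn_small // ltn_subrL b_gt0 (leq_trans _ b_lt_n).
Qed.

Lemma mulq3_mod a : 0 < a * q %% n -> a * q ^ 3 %% n = n - a * q %% n.
Proof.
move=> r_gt0; have n_gt0 : 0 < n by case: n n_dvd => //; rewrite dvd0n addn1.
by rewrite expnS mulnA -modnMml mulq2_mod // r_gt0 ltn_pmod.
Qed.

Lemma mulq_exp_fixed_double a d :
  0 < a < n -> 0 < d < 4 -> a * q ^ d = a %[mod n] -> a.*2 = n.
Proof.
move=> a_range d_range fix_d.
have fix_dt t : a * q ^ (d * t) = a %[mod n].
  elim: t => [|t IH]; first by rewrite muln0 expn0 muln1.
  by rewrite mulnS expnD mulnA -modnMml fix_d modnMml.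
have fix_2 : a * q ^ 2 = a %[mod n].
  have [t dt_mod4] : exists t, d * t %% 4 = 2.
    by case: d d_range {fix_d fix_dt} => [|[|[|[|d]]]] //; [exists 2 | exists 1 | exists 2].
  by rewrite -dt_mod4 -(mul_expn_mod_period expq4_mod) fix_dt.
rewrite mulq2_mod // modn_small in fix_2; last by case/andP: a_range.
by rewrite -addnn -{1}fix_2 subnK // ltnW //; case/andP: a_range.
Qed.

Lemma uniq_coset_seq4 a : 0 < a < n -> a.*2 != n -> uniq (coset_seq q n 4 a).
Proof.
move=> a_range a_ne_half; rewrite map_inj_in_uniq ?iota_uniq // => i j.
rewrite !mem_iota !add0n.
wlog le_ij : i j / i <= j => [hwlog i_lt j_lt eq_ij | i_lt j_lt eq_ij].
  have [le_ij | /ltnW le_ji] := leqP i j; first exact: hwlog.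
  exact/esym/(hwlog j i le_ji j_lt i_lt)/esym.
apply/eqP; rewrite eqn_leq le_ij leqNgt; apply/negP => lt_ij.
case/negP: a_ne_half; apply/eqP/(@mulq_exp_fixed_double a (j - i)) => //.
  by rewrite subn_gt0 lt_ij /= ltn_subLR // (leq_trans j_lt) // leq_addl.
have shift_j : a * q ^ (j - i) = a * q ^ j * q ^ (4 - i) %[mod n].
  rewrite -mulnA -expnD (_ : j + (4 - i) = j - i + 4); last by lia.
  by rewrite expnD mulnA -[in RHS]modnMmr expq4_mod modnMmr muln1.
have shift_i : a * q ^ i * q ^ (4 - i) = a %[mod n].
  rewrite -mulnA -expnD subnKC; last exact: ltnW.
  by rewrite -modnMmr expq4_mod modnMmr muln1.
by rewrite shift_j -modnMml -eq_ij modnMml.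
Qed.

Lemma card_cyc_coset_sqrtN1 a :
  4 <= n -> 0 < a < n -> a.*2 != n -> #|cyc_coset q n a| = 4.
Proof.
move=> n_ge4 a_range a_ne_half.
rewrite (card_cyc_coset_period (k := 4)) ?expq4_mod // undup_id.
  by rewrite size_map size_iota.
exact: uniq_coset_seq4.
Qed.

End SqrtN1.

Section SqrPlus1.

Variable q : nat.
Hypotheses (q_odd : odd q) (q_gt1 : 1 < q).

Local Notation n := (q ^ 2 + 1).
Local Notation h := ((q ^ 2 + 1) %/ 2).

Let n_ge4 : 4 <= n. Proof. nia. Qed.
Let expq4 : q ^ 4 = 1 %[mod n] := expq4_mod (dvdnn n).

Lemma double_half_sqr1 : h.*2 = n.
Proof. by rewrite -muln2 divnK // dvdn2 oddD oddX q_odd. Qed.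

Lemma double_eq_sqr1 a : (a.*2 == n) = (a == h).
Proof. by rewrite -{1}double_half_sqr1 (inj_eq double_inj). Qed.

Lemma half_mul_expq_mod i : h * q ^ i %% n = h.
Proof.
have h_lt_n : h < n by rewrite ltn_Pdiv // addn1.
elim: i => [|i IH]; first by rewrite expn0 muln1 modn_small.
rewrite [q ^ i.+1]expnSr mulnA -modnMml IH.
have -> : h * q = q./2 * n + h.
  have := double_half_sqr1; have := odd_double_half q.
  rewrite q_odd -!muln2; nia.
by rewrite modnMDl modn_small.
Qed.

Lemma card_cyc_coset_sqr1 a : 0 < a < n -> a != h -> #|cyc_coset q n a| = 4.
Proof. by move=> a_range a_ne_half; rewrite card_cyc_coset_sqrtN1 ?double_eq_sqr1. Qed.

Lemma coset_seq_half : coset_seq q n 4 h = nseq 4 h.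
Proof. by rewrite /coset_seq /= !half_mul_expq_mod. Qed.

Lemma is_min_rep_half : is_min_rep q n h.
Proof.
rewrite (is_min_rep_period (ltn0Sn 3) n_ge4 expq4) coset_seq_half /= leqnn.
by rewrite ltn_Pdiv // addn1.
Qed.

Lemma card_cyc_coset_half : #|cyc_coset q n h| = 1.
Proof.
by rewrite (card_cyc_coset_period (ltn0Sn 3) n_ge4 expq4) coset_seq_half /= !inE eqxx.
Qed.

Lemma mulq_mod_digits i j : i < q -> 0 < j < q -> (i * q + j) * q %% n = j * q - i.
Proof.
move=> i_lt_q j_range; have -> : (i * q + j) * q = i * n + (j * q - i) by nia.
by rewrite modnMDl modn_small //; nia.
Qed.

Lemma mulq_mod_digit0 i : 0 < i <= q -> i * q * q %% n = n - i.
Proof.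
move=> /andP[i_gt0 i_le_q].
have i_n : i * n = i * q * q + i by rewrite mulnDr muln1 -mulnA mulnn.
have n_le_i_n : n <= i * n by rewrite leq_pmull.
rewrite (_ : i * q * q = (i - 1) * n + (n - i)); last by rewrite mulnBl mul1n; lia.
by rewrite modnMDl modn_small // ltn_subrL i_gt0 addn1.
Qed.

Lemma min_rep_digit_bounds i j :
  i < q -> 0 < j < q -> (i * q + j).*2 != n ->
  [&& i * q + j <= j * q - i, i * q + j <= n - (i * q + j)
    & i * q + j <= n - (j * q - i)] = (i < j < q - i).
Proof.
move=> i_lt_q /andP[j_gt0 j_lt_q] a_ne_half.
have i_le_jq : i <= j * q by rewrite (leq_trans (ltnW i_lt_q)) // leq_pmull.
rewrite -mulnn; apply/and3P/andP => [[le_r1 _ le_r3] | [i_lt_j j_lt_q_i]].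
- have i_lt_j : i < j.
    rewrite ltnNge; apply/negP => le_ji.
    have : j * q <= i * q by rewrite leq_mul2r le_ji orbT.
    lia.
  split=> //; rewrite ltn_subRL; apply: contraNT a_ne_half; rewrite -leqNgt => q_le_ij.
  have qq_le : q * q <= i * q + j * q by rewrite -mulnDl leq_mul2r q_le_ij orbT.
  have j_eq : j = i.+1 by lia.
  have ij_eq : i + j = q.
    by apply/eqP; rewrite -(eqn_pmul2r (ltnW q_gt1)) mulnDl; lia.
  by apply/eqP; rewrite -ij_eq j_eq; nia.
- have : q <= (j - i) * q by rewrite leq_pmull // subn_gt0.
  have : i.*2 * q <= (q - 2) * q by rewrite leq_mul2r; lia.
  have : (i + j) * q <= (q - 1) * q by rewrite leq_mul2r; lia.
  rewrite !mulnBl -!muln2 mulnDl mul1n; split; lia.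
Qed.

Lemma is_min_rep_sqr1 a :
  0 < a < n -> a.*2 != n -> is_min_rep q n a = (a %/ q < a %% q < q - a %/ q).
Proof.
move=> /andP[a_gt0 a_lt_n] a_ne_half.
rewrite (is_min_rep_period (ltn0Sn 3) n_ge4 expq4) /coset_seq /= a_lt_n.
rewrite expn0 muln1 modn_small // leqnn expn1 (mulq2_mod (dvdnn n)) /= ?andbT; last first.
  by rewrite a_gt0.
have := ltn_pmod a (ltnW q_gt1); move: (divn_eq a q) a_gt0 a_lt_n a_ne_half.
move: (a %/ q) (a %% q) => i j -> {a} a_gt0 a_lt_n a_ne_half j_lt_q.
have i_lt_n : i < n.
  exact: leq_ltn_trans (leq_trans (leq_pmulr i (ltnW q_gt1)) (leq_addr j _)) a_lt_n.
have [j0 | j_gt0] := posnP j.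
- move: a_gt0; rewrite j0 addn0 ltn0 andFb muln_gt0 => /andP[i_gt0 _].
  have i_le_q : i <= q.
    rewrite leqNgt; apply/negP => q_lt_i.
    have : q.+1 * q <= i * q by rewrite leq_mul2r q_lt_i orbT.
    rewrite mulSn -mulnn in a_lt_n *; lia.
  have r1 : i * q * q %% n = n - i by rewrite mulq_mod_digit0 // i_gt0.
  rewrite (mulq3_mod (dvdnn n)) r1; last by rewrite subn_gt0.
  rewrite subKn; last exact: ltnW.
  by rewrite [i * q <= i]leqNgt (ltn_Pmulr q_gt1 i_gt0) !andbF.
- have i_lt_q : i < q.
    rewrite ltnNge; apply/negP => q_le_i.
    have : q * q <= i * q by rewrite leq_mul2r q_le_i orbT.
    rewrite -mulnn in a_lt_n; lia.
  have r1 : (i * q + j) * q %% n = j * q - i by rewrite mulq_mod_digits // j_gt0.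
  rewrite (mulq3_mod (dvdnn n)) r1; last first.
    by rewrite subn_gt0 (leq_trans i_lt_q) // leq_pmull.
  by rewrite min_rep_digit_bounds // j_gt0.
Qed.

Lemma digits_interval a :
  (exists l, l <= (q - 3) %/ 2 /\ l * (q + 1) + 1 <= a <= (l + 1) * (q - 1)) <->
  a %/ q < a %% q < q - a %/ q.
Proof.
have q_eq : q = 2 * (q %/ 2) + 1 by rewrite {1}(divn_eq q 2) modn2 q_odd mulnC.
split=> [[l [l_le /andP[lo hi]]] | /andP[i_lt_j j_lt]].
- have l_le_lq : l <= l * q by rewrite leq_pmulr // ltnW.
  move: lo hi; rewrite mulnDr muln1 mulnDl mul1n mulnBr muln1 => lo hi.
  have r_lt : a - l * q < q by lia.
  have -> : a = l * q + (a - l * q) by lia.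
  rewrite divnMDl ?(ltnW q_gt1) // modnMDl divn_small // addn0 modn_small //.
  by apply/andP; split; lia.
- exists (a %/ q); split; first by lia.
  move: (a %/ q) (a %% q) (divn_eq a q) i_lt_j j_lt => l j -> lt_lj lt_j.
  rewrite mulnDr muln1 mulnDl mul1n mulnBr muln1.
  have l_le_lq : l <= l * q by rewrite leq_pmulr // ltnW.
  by apply/andP; split; lia.
Qed.

End SqrPlus1.

Theorem lemma11 (q : nat) :
  prime_power q -> odd q ->
  let n := q ^ 2 + 1 in
  (forall a : nat, 1 <= a <= n - 1 ->
     (is_min_rep q n a <->
        (a = (q ^ 2 + 1) %/ 2 \/
         exists l : nat, l <= (q - 3) %/ 2 /\
           l * (q + 1) + 1 <= a <= (l + 1) * (q - 1)))) /\
  #|cyc_coset q n ((q ^ 2 + 1) %/ 2)| = 1 /\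
  (forall a : nat, is_min_rep q n a -> a <> 0 -> a <> (q ^ 2 + 1) %/ 2 ->
     #|cyc_coset q n a| = 4).
Proof.
move=> [p [k [p_prime [k_gt0 q_eq]]]] q_odd n.
have q_gt1 : 1 < q by rewrite q_eq -(expn0 p) ltn_exp2l ?prime_gt1.
split; [|split].
- move=> a /andP[a_gt0 a_le]; have a_lt_n : a < n.
    by move: a_le; rewrite /n addnK addn1 ltnS.
  have [-> | a_ne_half] := eqVneq a ((q ^ 2 + 1) %/ 2).
    by split=> _; [left | exact: is_min_rep_half].
  rewrite is_min_rep_sqr1 ?a_gt0 ?double_eq_sqr1 //.
  have interval_a := digits_interval q_odd q_gt1 a.
  split=> [/interval_a ex_l | [a_eq | /interval_a //]]; first by right.
  by rewrite a_eq eqxx in a_ne_half.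
- exact: card_cyc_coset_half.
- move=> a /andP[a_lt_n _] a_ne0 a_ne_half.
  rewrite card_cyc_coset_sqr1 //; last exact/eqP.
  by rewrite lt0n a_lt_n andbT; apply/eqP.
Qed.
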